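(* Let $G\in\mathcal{T}$ be uncontractible. Then every interior vertex of $G$ has degree at least $6$.
   Context: A torus graph with a single hole is a graph $G$ determined by a triple $(T,D,i)$ as follows. $M$ is a finite simplicial complex triangulating the torus $S^1\times S^1$ whose $1$-skeleton $T$ is a simple graph. $D$ is a simplicial complex triangulating a closed disc. $i:D\to M$ is a simplicial map which is injective on $2$-simplexes and respects adjacency of $2$-simplexes. $G$ is the subgraph of $T$ obtained by deleting the edges that are images under $i$ of interior $1$-simplexes of $D$. Its facial $3$-cycles are the $3$-cycles of $T$ bounding $2$-simplexes of $M$ that are not images of $2$-simplexes of $D$. The boundary graph $\partial G=i(\partial D)$ consists of the edges not lying in two facial $3$-cycles. For a finite simple graph $H=(V,E)$ the freedom number is $f(H)=3|V|-|E|$. $H$ is $(3,6)$-tight if $f(H)=6$ and $f(K)\ge 6$ for every subgraph $K$ with at least $3$ vertices. $\mathcal{T}$ denotes the class of $(3,6)$-tight torus graphs with a single hole. An edge is of type $FF$ if it lies in two facial $3$-cycles. $G$ is uncontractible if every $FF$ edge lies on a non-facial $3$-cycle. An interior vertex is a vertex of $G$ not lying on $\partial G$. *)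

From HB Require Import structures.
From mathcomp Require Import all_boot.
Set Implicit Arguments. Unset Strict Implicit. Unset Printing Implicit Defensive.

Section Complexes.
Variable V : finType.
(* A pure 2-dimensional simplicial complex is given by its set [F] of
   2-simplexes, each a 3-element vertex set; vertices are elements of [V]. *)

Definition edges (F : {set {set V}}) : {set {set V}} :=
  [set e : {set V} | (#|e| == 2) && [exists f in F, e \subset f]].

Definition nfaces (F : {set {set V}}) (e : {set V}) : nat :=
  #|[set f in F | e \subset f]|.

Definition skel_adj (F : {set {set V}}) : rel V :=
  fun a b => [set a; b] \in edges F.

Definition link_rel (F : {set {set V}}) (v : V) : rel V :=
  fun a b => [exists f in F, [&& v \in f, a \in f, b \in f, a != v, b != v & a != b]].

Definition link_vertex (F : {set {set V}}) (v a : V) : bool :=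
  (a != v) && [exists f in F, (v \in f) && (a \in f)].

Definition pure2 (F : {set {set V}}) : Prop :=
  (forall f, f \in F -> #|f| = 3) /\
  (forall v : V, exists2 f, f \in F & v \in f).

Definition links_connected (F : {set {set V}}) : Prop :=
  forall v a b, link_vertex F v a -> link_vertex F v b -> connect (link_rel F v) a b.

Definition skel_connected (F : {set {set V}}) : Prop :=
  forall a b : V, connect (skel_adj F) a b.

(* orientation: a cyclic order s f on each triangle f, coherent along
   every edge shared by two triangles *)
Definition orientable (F : {set {set V}}) : Prop :=
  exists s : {set V} -> V -> V,
    (forall f x, f \in F -> x \in f -> [/\ s f x \in f, s f x != x & s f (s f x) != x]) /\
    (forall f g u v, f \in F -> g \in F -> f != g -> u \in f -> u \in g ->
       v \in f -> v \in g -> s f u = v -> s g v = u).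

(* combinatorial triangulation of the torus S^1 x S^1: a connected closed
   orientable combinatorial 2-manifold of Euler characteristic 0 *)
Definition torus_triangulation (F : {set {set V}}) : Prop :=
  pure2 F /\
  [/\ (forall e, e \in edges F -> nfaces F e = 2),
      links_connected F,
      skel_connected F,
      orientable F
    & #|V| + #|F| = #|edges F|].

(* combinatorial triangulation of a closed disc: a connected combinatorial
   2-manifold with nonempty boundary and Euler characteristic 1 *)
Definition disc_triangulation (F : {set {set V}}) : Prop :=
  pure2 F /\
  [/\ (forall e, e \in edges F -> nfaces F e = 1 \/ nfaces F e = 2),
      links_connected F,
      skel_connected F,
      (exists2 e, e \in edges F & nfaces F e = 1)
    & #|V| + #|F| = #|edges F| + 1].

Definition interior_edges (F : {set {set V}}) : {set {set V}} :=
  [set e in edges F | nfaces F e == 2].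

Definition boundary_edges (F : {set {set V}}) : {set {set V}} :=
  [set e in edges F | nfaces F e == 1].

Definition boundary_vertices (F : {set {set V}}) : {set V} :=
  [set w | [exists e in boundary_edges F, w \in e]].

End Complexes.

Section Hole.
Variables (V W : finType) (FM : {set {set V}}) (FD : {set {set W}}) (i : W -> V).

Definition hole_map : Prop :=
  [/\ (forall d, d \in FD -> i @: d \in FM /\ #|i @: d| = 3),
      (forall d1 d2, d1 \in FD -> d2 \in FD -> i @: d1 = i @: d2 -> d1 = d2)
    & (forall d1 d2, d1 \in FD -> d2 \in FD -> #|d1 :&: d2| = 2 ->
         #|(i @: d1) :&: (i @: d2)| = 2)].

Definition G_edges : {set {set V}} :=
  edges FM :\: [set i @: e | e : {set W} in interior_edges FD].

Definition G_facial : {set {set V}} :=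
  FM :\: [set i @: d | d : {set W} in FD].

Definition G_boundary_vertices : {set V} := i @: boundary_vertices FD.

Definition G_interior_vertex (v : V) : bool := v \notin G_boundary_vertices.

Definition G_degree (v : V) : nat := #|[set e in G_edges | v \in e]|.

Definition G_tight : Prop :=
  3 * #|V| = #|G_edges| + 6 /\
  forall (S : {set V}) (EK : {set {set V}}),
    EK \subset G_edges -> (forall e, e \in EK -> e \subset S) -> 3 <= #|S| ->
    #|EK| + 6 <= 3 * #|S|.

Definition FF_edge (e : {set V}) : bool :=
  (e \in G_edges) && (#|[set f in G_facial | e \subset f]| == 2).

Definition on_nonfacial_3cycle (e : {set V}) : Prop :=
  exists a b c : V,
    [/\ #|[set a; b; c]| = 3, [set a; b] \in G_edges, [set b; c] \in G_edges
      & [set a; c] \in G_edges] /\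
    [set a; b; c] \notin G_facial /\ e \subset [set a; b; c].

Definition G_uncontractible : Prop :=
  forall e, FF_edge e -> on_nonfacial_3cycle e.

End Hole.

From mathcomp Require Import all_boot zify.
Set Implicit Arguments. Unset Strict Implicit. Unset Printing Implicit Defensive.

(* An edge vu at an interior vertex v is not the image of an edge of the disc,
   so both triangles of the torus on vu are facial and vu is an FF edge. Their
   apexes, together with the apex of the non-facial 3-cycle through vu given by
   uncontractibility, are three distinct common neighbours of v and u. Thus the
   neighbourhood N of v spans at least 3|N|/2 edges, and (3,6)-sparsity of the
   cone on v over N gives |N| + 3|N|/2 + 6 <= 3(|N| + 1), i.e. |N| >= 6.
   Tightness also excludes N = {} (vertices of M inside the hole are vertices
   of G), since deleting an isolated vertex would break the count. *)

Section Graph.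
Variable T : finType.
Implicit Types (E : {set {set T}}) (S e t : {set T}) (u v w x : T).

Lemma triangle_edges E x y z :
  [set x; y] \in E -> [set y; z] \in E -> [set x; z] \in E ->
  forall e, e \subset [set x; y; z] -> #|e| = 2 -> e \in E.
Proof.
move=> xy yz xz e + /eqP/cards2P [a [b [ab e_ab]]]; rewrite e_ab.
rewrite subUset !sub1set => /andP [aT bT]; move: aT bT ab.
by case/setUP=> [/setUP [] |] /set1P-> /setUP [/setUP [] |] /set1P->;
  rewrite ?eqxx //= => _; rewrite // setUC.
Qed.

Lemma card3_superset_pair t u v :
  #|t| = 3 -> u != v -> [set u; v] \subset t ->
  exists2 x, x \notin [set u; v] & t = [set u; v; x].
Proof.
move=> t3 uv uvt; have /subsetPn [x xt xuv] : ~~ (t \subset [set u; v]).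
  by apply: contraTN isT => /subset_leq_card; rewrite t3 cards2 uv.
exists x => //; apply/eqP; rewrite eq_sym eqEcard t3 setUC cardsU1 xuv cards2 uv.
by rewrite subUset sub1set xt uvt.
Qed.

Definition nbrs E v : {set T} := [set w | [set v; w] \in E].

Definition sparse36 E : Prop :=
  forall S (EK : {set {set T}}), EK \subset E -> (forall e, e \in EK -> e \subset S) ->
    3 <= #|S| -> #|EK| + 6 <= 3 * #|S|.

Lemma triangle_apex E t u v :
  #|t| = 3 -> u != v -> [set u; v] \subset t ->
  (forall e, e \subset t -> #|e| = 2 -> e \in E) ->
  exists2 x, t = [set u; v; x] & x \in nbrs E u :&: nbrs E v.
Proof.
move=> t3 uv uvt tE; have [x xuv e_t] := card3_superset_pair t3 uv uvt.
move: xuv; rewrite !inE negb_or => /andP [xu xv].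
exists x => //; rewrite !inE; apply/andP; split; apply: tE;
  by rewrite ?cards2 1?eq_sym ?xu ?xv // e_t subUset !sub1set !inE !eqxx ?orbT.
Qed.

Lemma nbrs_restrict E (N : {set T}) u :
  u \in N -> nbrs [set e in E | e \subset N] u = N :&: nbrs E u.
Proof. by move=> uN; apply/setP=> w; rewrite !inE subUset !sub1set uN andbC. Qed.

Section SimpleEdges.
Variable E : {set {set T}}.
Hypothesis E2 : {in E, forall e, #|e| = 2}.

Lemma nbrs_irrefl v : v \notin nbrs E v.
Proof. by rewrite inE; apply: contraTN isT => /E2; rewrite setUid cards1. Qed.

Lemma edges_at_nbrs v : [set e in E | v \in e] = [set [set v; w] | w in nbrs E v].
Proof.
apply/setP=> e; rewrite inE; apply/andP/imsetP => [[eE ve] | [w vw ->]].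
  have /eqP/cards2P [a [b [ab e_ab]]] := E2 eE.
  have [w e_vw] : exists w, e = [set v; w].
    by move: ve; rewrite e_ab !inE => /orP [] /eqP->; [exists b | exists a; rewrite setUC].
  by exists w; rewrite // inE -e_vw.
by split; [rewrite inE in vw | exact: setU11].
Qed.

Lemma card_edges_at v : #|[set e in E | v \in e]| = #|nbrs E v|.
Proof.
rewrite edges_at_nbrs card_in_imset // => a b va vb e_ab.
have : a \in [set v; b] by rewrite -e_ab !inE eqxx orbT.
rewrite !inE => /orP [/eqP av | /eqP //].
by move: va (nbrs_irrefl v); rewrite av => ->.
Qed.

Lemma handshake (N : {set T}) :
  {in E, forall e, e \subset N} -> \sum_(u in N) #|[set e in E | u \in e]| = 2 * #|E|.
Proof.
move=> EN; rewrite mulnC -sum_nat_const.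
under eq_bigr => u _ do rewrite -sum1dep_card.
rewrite (exchange_big_dep (mem E)) /=; last by move=> u e _ /andP [].
apply: eq_bigr => e eE; rewrite sum1dep_card -(E2 eE); apply: eq_card => u.
by rewrite inE eE andTb andb_idl // => /(subsetP (EN e eE)).
Qed.

Lemma nbrs_nonempty v :
  sparse36 E -> 3 * #|T| = #|E| + 6 -> 4 <= #|T| -> nbrs E v != set0.
Proof.
move=> sparseE cardE T4; apply/negP => /eqP N0.
have E_off_v : forall e, e \in E -> e \subset [set~ v].
  move=> e eE; apply/subsetP => w we; rewrite in_setC1; apply: contraTneq isT => wv.
  have : e \in [set e in E | v \in e] by rewrite inE eE -wv.
  by rewrite edges_at_nbrs N0 imset0 inE.
have := sparseE _ _ (subxx E) E_off_v; rewrite cardsC1; lia.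
Qed.

End SimpleEdges.

Lemma card_nbrs_ge6 E v :
  {in E, forall e, #|e| = 2} ->
  sparse36 E -> (forall u, u \in nbrs E v -> 3 <= #|nbrs E v :&: nbrs E u|) ->
  nbrs E v != set0 -> 6 <= #|nbrs E v|.
Proof.
set N := nbrs E v => E2 sparseE degN /set0Pn [u uN].
set EN := [set e in E | e \subset N]; set spokes := [set e in E | v \in e].
have EN2 : {in EN, forall e, #|e| = 2} by move=> e; rewrite inE => /andP [/E2].
have handshakeN : 3 * #|N| <= 2 * #|EN|.
  rewrite -(handshake EN2 (N := N)); last by move=> e; rewrite inE => /andP [].
  rewrite mulnC -sum_nat_const leq_sum // => w wN.
  by rewrite (card_edges_at EN2) nbrs_restrict //; apply: degN.
have N3 : 3 <= #|N| by apply: leq_trans (degN u uN) (subset_leq_card (subsetIl _ _)).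
have EN_spokes0 : EN :&: spokes = set0.
  apply/setP=> e; rewrite !inE; apply/negP => /andP [/andP [_ eN] /andP [_ ve]].
  by have := nbrs_irrefl E2 v; rewrite -/N (subsetP eN).
have card_cone : #|EN :|: spokes| = #|EN| + #|N|.
  by rewrite -(card_edges_at E2 v) -cardsUI EN_spokes0 cards0 addn0.
have cone_sub : EN :|: spokes \subset E.
  by apply/subsetP=> e /setUP [] /[!inE] /andP [].
have cone_in : forall e, e \in EN :|: spokes -> e \subset v |: N.
  move=> e /setUP [/[!inE] /andP [_ eN] | ]; first exact: subset_trans eN (subsetUr _ _).
  by rewrite /spokes (edges_at_nbrs E2) => /imsetP [w wN ->]; rewrite setUS // sub1set.
have := sparseE (v |: N) (EN :|: spokes) cone_sub cone_in.
rewrite card_cone cardsU1 -/N (nbrs_irrefl E2); lia.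
Qed.

End Graph.

Lemma mem_edges (T : finType) (F : {set {set T}}) (f e : {set T}) :
  f \in F -> e \subset f -> #|e| = 2 -> e \in edges F.
Proof. by move=> fF ef e2; rewrite inE e2 eqxx; apply/existsP; exists f; rewrite fF. Qed.

Lemma two_facesP (T : finType) (F : {set {set T}}) (e : {set T}) :
  nfaces F e = 2 ->
  exists f1, exists2 f2, f1 != f2 & [/\ f1 \in F, f2 \in F, e \subset f1 & e \subset f2].
Proof.
move/eqP/cards2P => [f1 [f2 [f12 e_faces]]]; exists f1, f2 => //.
have : (f1 \in [set f in F | e \subset f]) && (f2 \in [set f in F | e \subset f]).
  by rewrite e_faces !inE !eqxx orbT.
by rewrite !inE => /andP [/andP [-> ->] /andP [-> ->]].
Qed.

Section TorusWithHole.
Variables (V W : finType) (FM : {set {set V}}) (FD : {set {set W}}) (i : W -> V).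
Hypothesis FM_card3 : forall f, f \in FM -> #|f| = 3.
Hypothesis FM_edge_faces : forall e, e \in edges FM -> nfaces FM e = 2.
Hypothesis FD_edge_faces : forall e, e \in edges FD -> nfaces FD e = 1 \/ nfaces FD e = 2.
Hypothesis hole_faces : forall d, d \in FD -> i @: d \in FM.
Hypothesis hole_inj : forall d1 d2, d1 \in FD -> d2 \in FD -> i @: d1 = i @: d2 -> d1 = d2.

Implicit Types (e f : {set V}) (d : {set W}) (u v : V).

Local Notation GE := (G_edges FM FD i).
Local Notation interior := (G_interior_vertex FD i).

Lemma four_le_card_vertices f : f \in FM -> 4 <= #|V|.
Proof.
move=> fM; have /card_gt2P [x [y [_ [[xf yf _] [xy _ _]]]]] : 2 < #|f| by rewrite FM_card3.
have xyM : [set x; y] \in edges FM.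
  by apply: mem_edges fM _ _; rewrite ?cards2 ?xy // subUset !sub1set xf yf.
have [g1 [g2 g12 [g1M g2M _ _]]] := two_facesP (FM_edge_faces xyM).
have g21 : ~~ (g2 \subset g1).
  by apply: contra g12 => g21; rewrite eq_sym eqEcard g21 !FM_card3.
by apply: leq_trans (max_card (g1 :|: g2)); rewrite -(FM_card3 g1M) proper_card ?properUl.
Qed.

Lemma G_edges_sub : {subset GE <= edges FM}.
Proof. by move=> e /setDP []. Qed.

Lemma G_edges_card2 : {in GE, forall e : {set V}, #|e| = 2}.
Proof. by move=> e /G_edges_sub /[!inE] /andP [/eqP]. Qed.

Lemma G_edge_neq u v : [set u; v] \in GE -> u != v.
Proof. by move/G_edges_card2; rewrite cards2; case: (u != v). Qed.

Lemma facial_edge_in_G f e :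
  f \in G_facial FM FD i -> e \subset f -> #|e| = 2 -> e \in GE.
Proof.
move=> /setDP [fM f_not_hole] ef e2; have eM := mem_edges fM ef e2.
rewrite in_setD eM andbT; apply/imsetP => [[e' /[!inE] /andP [_ /eqP e'2] e_e']].
have [d1 [d2 d12 [d1D d2D e'd1 e'd2]]] := two_facesP e'2.
suff: 2 < nfaces FM e by rewrite FM_edge_faces.
apply/card_gt2P; exists f, (i @: d1), (i @: d2); split.
  by rewrite !inE fM ef !hole_faces // e_e' !imsetS.
split.
- by apply: contraNneq f_not_hole => ->; rewrite imset_f.
- by apply: contraNneq d12 => /hole_inj ->.
- by apply: contraNneq f_not_hole => <-; rewrite imset_f.
Qed.

Section InteriorVertex.
Variable v : V.
Hypothesis v_interior : interior v.

Lemma interior_edge_not_in_hole u d :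
  [set v; u] \in GE -> d \in FD -> ~~ ([set v; u] \subset i @: d).
Proof.
move=> vuG dD; apply/negP; rewrite subUset !sub1set.
move=> /andP [/imsetP [w wd v_w] /imsetP [y yd u_y]]; rewrite v_w u_y in vuG.
have wy : w != y by apply: contra_neq (G_edge_neq vuG) => ->.
have wyD : [set w; y] \in edges FD.
  by apply: mem_edges dD _ _; rewrite ?cards2 ?wy // subUset !sub1set wd yd.
case: (FD_edge_faces wyD) => /eqP wy_faces.
  apply: (negP v_interior); rewrite v_w imset_f // inE; apply/existsP; exists [set w; y].
  by rewrite inE wyD wy_faces setU11.
move/setDP: vuG => [_]; apply/negP/negPn/imsetP; exists [set w; y].
  by rewrite inE wyD wy_faces.
by rewrite imsetU1 imset_set1.
Qed.

Lemma interior_face_facial u f :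
  [set v; u] \in GE -> f \in FM -> [set v; u] \subset f -> f \in G_facial FM FD i.
Proof.
move=> vuG fM vuf; rewrite in_setD fM andbT; apply/imsetP => [[d dD f_d]].
by move: vuf; rewrite f_d; apply/negP/interior_edge_not_in_hole.
Qed.

Lemma interior_edge_FF u : [set v; u] \in GE -> FF_edge FM FD i [set v; u].
Proof.
move=> vuG; rewrite /FF_edge vuG -(FM_edge_faces (G_edges_sub vuG)); apply/eqP/eq_card => f.
rewrite !inE -andbA; apply: andb_idl => /andP [fM vuf].
by have /setDP [] := interior_face_facial vuG fM vuf.
Qed.

Lemma interior_common_nbrs u :
  G_uncontractible FM FD i -> u \in nbrs GE v -> 3 <= #|nbrs GE v :&: nbrs GE u|.
Proof.
move=> unc; rewrite in_set => vuG; have vu := G_edge_neq vuG.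
have facial_apex f : f \in FM -> [set v; u] \subset f ->
    exists2 p, f = [set v; u; p] & p \in nbrs GE v :&: nbrs GE u.
  move=> fM vuf; have f_facial := interior_face_facial vuG fM vuf.
  by apply: triangle_apex (FM_card3 fM) vu vuf _ => e; apply: facial_edge_in_G.
have [f1 [f2 f12 [f1M f2M vuf1 vuf2]]] := two_facesP (FM_edge_faces (G_edges_sub vuG)).
have [p1 e_f1 p1N] := facial_apex f1 f1M vuf1.
have [p2 e_f2 p2N] := facial_apex f2 f2M vuf2.
have [a [b [c [[c3 ab bc ac] [t_nonfacial vut]]]]] := unc _ (interior_edge_FF vuG).
have [x e_t xN] := triangle_apex c3 vu vut (triangle_edges ab bc ac).
apply/card_gt2P; exists p1, p2, x; split => //; split.
- by apply: contraNneq f12 => p12; rewrite e_f1 e_f2 p12.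
- apply: contraNneq t_nonfacial => p2x; rewrite e_t -p2x -e_f2.
  exact: interior_face_facial vuG f2M vuf2.
- apply: contraNneq t_nonfacial => xp1; rewrite e_t xp1 -e_f1.
  exact: interior_face_facial vuG f1M vuf1.
Qed.

End InteriorVertex.

End TorusWithHole.

Theorem lemma5p1 (V W : finType) (FM : {set {set V}}) (FD : {set {set W}}) (i : W -> V) :
  torus_triangulation FM -> disc_triangulation FD -> hole_map FM FD i ->
  G_tight FM FD i -> G_uncontractible FM FD i ->
  forall v : V, G_interior_vertex FD i v -> 6 <= G_degree FM FD i v.
Proof.
move=> [[FM_card3 FM_cover] [FM_edge_faces _ _ _ _]] [_ [FD_edge_faces _ _ _ _]].
move=> [hole_faces hole_inj _] [card_G sparse_G] unc v v_interior.
have hole_faces' d : d \in FD -> i @: d \in FM by case/hole_faces.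
have G2 := @G_edges_card2 V W FM FD i.
rewrite /G_degree (card_edges_at G2); apply: (card_nbrs_ge6 G2 sparse_G) => [u uN |].
  exact: (interior_common_nbrs FM_card3 FM_edge_faces FD_edge_faces hole_faces' hole_inj).
have [f fM _] := FM_cover v.
exact: nbrs_nonempty G2 v sparse_G card_G (four_le_card_vertices FM_card3 FM_edge_faces fM).
Qed.
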